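(* Let $\mathcal{G}\in\mathbf{G}$ be a periodic graph. For every $\lambda<0$ there exists a subspace $Y\subset H^1(\mathcal{G})$ with $\dim Y=3$ such that \[ \|w'\|_{L^2(\mathcal G)}^2+\lambda\|w\|_{L^2(\mathcal G)}^2\le\frac\lambda2\|w\|_{H^1(\mathcal{G})}^2\qquad\forall w\in Y. \]
   Context: $\mathbf{G}$: connected metric graphs with at most countably many edges, finite vertex degrees and $\inf_e|e|>0$. A periodic graph has infinitely many edges of uniformly bounded length arranged periodically (free cocompact $\mathbb Z^d$-action by isometries). $\|w\|_{H^1(\mathcal G)}^2=\|w'\|_{L^2}^2+\|w\|_{L^2}^2$. *)

From HB Require Import structures.
From mathcomp Require Import all_boot all_order all_algebra.
From mathcomp Require Import all_classical all_reals all_analysis.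
Set Implicit Arguments. Unset Strict Implicit. Unset Printing Implicit Defensive.
Import Order.TTheory GRing.Theory Num.Theory.
Import numFieldNormedType.Exports.
Local Open Scope classical_set_scope.
Local Open Scope ring_scope.

(* A (combinatorial skeleton of a) metric graph: countably many vertices and
   edges, each edge e identified with the interval [0, len e], its point 0 is
   glued to the vertex src e and its point len e to the vertex tgt e.
   (Edges of graphs in the class G considered here are all bounded, since a
   periodic graph has edges of uniformly bounded length.) *)
Record mgraph (R : realType) := MGraph {
  mE : countType;
  mV : countType;
  src : mE -> mV;
  tgt : mE -> mV;
  len : mE -> R }.

Section Graphs.
Variable R : realType.
Variable G : mgraph R.

Definition incident (e : mE G) (v : mV G) := src e = v \/ tgt e = v.
Definition adj (e : mE G) (v w : mV G) :=
  (src e = v /\ tgt e = w) \/ (src e = w /\ tgt e = v).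

Inductive reach (u : mV G) : mV G -> Prop :=
| reach_refl : reach u u
| reach_step v w e : reach u v -> adj e v w -> reach u w.

Definition in_classG :=
  (forall e : mE G, 0 < len e) /\
  (forall u v : mV G, reach u v) /\
  (forall v : mV G, exists s : seq (mE G), forall e : mE G, incident e v -> e \in s) /\
  (exists c : R, 0 < c /\ forall e : mE G, c <= len e).

(* periodic: infinitely many edges, uniformly bounded lengths, and a free
   cocompact action of Z^d by graph isometries (length-preserving graph
   automorphisms, possibly reversing the orientation of edges). *)
Definition periodic_graph :=
  in_classG /\
  ~ (exists s : seq (mE G), forall e : mE G, e \in s) /\
  (exists M : R, forall e : mE G, len e <= M) /\
  exists (d : nat) (aV : 'rV[int]_d -> mV G -> mV G)
                   (aE : 'rV[int]_d -> mE G -> mE G),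
    (forall v : mV G, aV 0 v = v) /\ (forall e : mE G, aE 0 e = e) /\
    (forall k l (v : mV G), aV (k + l) v = aV k (aV l v)) /\
    (forall k l (e : mE G), aE (k + l) e = aE k (aE l e)) /\
    (forall k (e : mE G), len (aE k e) = len e) /\
    (forall k (e : mE G), adj (aE k e) (aV k (src e)) (aV k (tgt e))) /\
    (forall k (v : mV G), aV k v = v -> k = 0) /\
    (forall k (e : mE G), aE k e = e -> k = 0) /\
    (exists s : seq (mE G), forall e : mE G, exists k e0, e0 \in s /\ e = aE k e0) /\
    (exists s : seq (mV G), forall v, exists k v0, v0 \in s /\ v = aV k v0).

Definition edge_H1 (l : R) (f g : R -> R) :=
  (@lebesgue_measure R).-integrable `[0%R, l] (EFin \o g) /\
  (\int[@lebesgue_measure R]_(x in `[0%R, l]) ((g x) ^+ 2)%:E < +oo)%E /\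
  (\int[@lebesgue_measure R]_(x in `[0%R, l]) ((f x) ^+ 2)%:E < +oo)%E /\
  forall x, 0 <= x <= l ->
    f x = f 0 + Rintegral (@lebesgue_measure R) `[0%R, x] g.

Definition endval (u : mE G -> R -> R) (e : mE G) (b : bool) :=
  if b then u e (len e) else u e 0.
Definition endvtx (e : mE G) (b : bool) := if b then tgt e else src e.

Definition L2sq (u : mE G -> R -> R) : \bar R :=
  (\esum_(e in [set: mE G])
     \int[@lebesgue_measure R]_(x in `[0%R, len e]) ((u e x) ^+ 2)%:E)%E.

(* u is in H^1(G) with derivative u' (edgewise, in the orientation of edges) *)
Definition inH1 (u u' : mE G -> R -> R) :=
  (forall e : mE G, edge_H1 (len e) (u e) (u' e)) /\
  (forall (e e' : mE G) b b', endvtx e b = endvtx e' b' -> endval u e b = endval u e' b') /\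
  (L2sq u < +oo)%E /\ (L2sq u' < +oo)%E.

Definition lincomb3 (a1 a2 a3 : R) (u1 u2 u3 : mE G -> R -> R) :=
  fun e x => a1 * u1 e x + a2 * u2 e x + a3 * u3 e x.

Definition linindep3 (u1 u2 u3 : mE G -> R -> R) :=
  forall a1 a2 a3 : R,
    (forall (e : mE G) x, 0 <= x <= len e -> lincomb3 a1 a2 a3 u1 u2 u3 e x = 0) ->
    a1 = 0 /\ a2 = 0 /\ a3 = 0.

End Graphs.

(* Through the cocompact Z^d-action every vertex gets a lattice coordinate,
   and the endpoints of an edge have coordinates at sup-distance at most 2r
   for some fixed r.  Let u_j interpolate linearly along edges the vertex
   function min(N, 2N - |x - c_j|)^+ of the coordinate x, with far apart
   centers c_j = 3 j N e_1.  Over the cube of radius N - r around c_j, u_j is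
   the constant N and the other two vanish, so w = sum_j a_j u_j satisfies
   |w|^2 >= c |a|^2 N^2 (2(N - r) + 1)^d / 3, c the minimal edge length.
   The u_j change by at most 2r along an edge and live on the edges over a
   cube of radius 8N + r, so |w'|^2 <= C |a|^2 N^d.  Hence
   (1 - lambda/2) |w'|^2 <= (-lambda/2) |w|^2 once N is large, which is the
   claimed inequality. *)

From HB Require Import structures.
From mathcomp Require Import all_boot all_order all_algebra.
From mathcomp Require Import all_classical all_reals all_analysis.
From mathcomp Require Import measurable_realfun.
From mathcomp Require Import zify ring lra.
Set Implicit Arguments. Unset Strict Implicit. Unset Printing Implicit Defensive.
Import Order.TTheory GRing.Theory Num.Theory.
Local Open Scope classical_set_scope.
Local Open Scope ring_scope.

Section FiniteEsum.
Local Open Scope ereal_scope.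
Context {R : realType}.

Lemma esum_finType (I : finType) (g : I -> \bar R) : (forall i, 0 <= g i) ->
  \esum_(i in [set: I]) g i = \sum_(i : I) g i.
Proof.
move=> g_ge0; rewrite esum_fset; last by move=> *; exact: g_ge0.
  rewrite (fsbigE (enum I)) ?enum_uniq //.
  - by rewrite big_enum_cond /=; apply: eq_bigl => i; rewrite in_setT.
  - by move=> i; rewrite mem_enum.
exact: finite_finset.
Qed.

Lemma le_esum_subset (T : choiceType) (f : T -> \bar R) (A B : set T) :
  (forall t, 0 <= f t) -> A `<=` B ->
  \esum_(t in A) f t <= \esum_(t in B) f t.
Proof.
move=> f_ge0 AB; rewrite (esum_mkcond A) (esum_mkcond B); apply: le_esum => t _.
case: ifPn => tA; first by rewrite ifT // inE; apply: AB; rewrite -inE.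
by case: ifP.
Qed.

Lemma sum_le_esum_inj (T : choiceType) (I : finType) (f : T -> \bar R) (g : I -> T) :
  (forall t, 0 <= f t) -> injective g ->
  \sum_(i : I) f (g i) <= \esum_(t in [set: T]) f t.
Proof.
move=> f_ge0 g_inj; rewrite -esum_finType // -(esum_image [set: I] g f).
  exact: le_esum_subset.
by move=> x y _ _; exact: g_inj.
Qed.

Lemma esum_le_sum_cover (T : choiceType) (I : finType) (f : T -> \bar R) (g : I -> T) :
  (forall t, 0 <= f t) -> (forall t, f t != 0 -> exists i, g i = t) ->
  \esum_(t in [set: T]) f t <= \sum_(i : I) f (g i).
Proof.
move=> f_ge0 cover.
(* g is injective on the canonical preimages chosen by [pick], which still cover the support of f *)
pose canon : set I := fun i => [pick j | g j == g i] = Some i.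
have canon_inj : set_inj canon g.
  move=> i j; rewrite /canon !inE /= => ei ej gij.
  by move: ei; rewrite gij ej => -[].
have supp_canon : [set t | f t != 0] `<=` g @` canon.
  move=> t /cover [i <-].
  have [j gji pick_j] : exists2 j, g j = g i & [pick k | g k == g i] = Some j.
    by case: pickP => [j /eqP gji|/(_ i)]; [exists j | rewrite eqxx].
  by exists j => //; rewrite /canon /= gji.
have -> : \esum_(t in [set: T]) f t = \esum_(t in [set t | f t != 0]) f t.
  rewrite [RHS]esum_mkcond; apply: eq_esum => t _.
  by case: ifPn => // /negP; rewrite inE /= => /negP; rewrite negbK => /eqP.
apply: le_trans (le_esum_subset f_ge0 supp_canon) _.
by rewrite esum_image // -esum_finType //; exact: le_esum_subset.
Qed.

End FiniteEsum.

Lemma sqr_natr_sub_le (R : realDomainType) (x y D : nat) :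
  (x <= y + D)%N -> (y <= x + D)%N -> (x%:R - y%:R) ^+ 2 <= D%:R ^+ 2 :> R.
Proof. by rewrite -!(ler_nat R) !natrD => xy yx; nra. Qed.

Lemma sqr_add3_le (R : realDomainType) (x y z : R) :
  (x + y + z) ^+ 2 <= 3 * (x ^+ 2 + y ^+ 2 + z ^+ 2).
Proof.
have xy := sqr_ge0 (x - y); have yz := sqr_ge0 (y - z); have xz := sqr_ge0 (x - z).
nra.
Qed.

Lemma quadratic_form_le_half (R : realFieldType) (lam D M S Kd Km : R) :
  lam < 0 -> 0 <= S -> D <= S * Kd -> S * Km <= M ->
  (1 - lam / 2) * Kd <= - lam / 2 * Km -> D + lam * M <= lam / 2 * (D + M).
Proof.
move=> lam_lt0 S_ge0 D_le M_ge K_le.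
have p1 : 0 <= (1 - lam / 2) * (S * Kd - D) by apply: mulr_ge0; [lra | rewrite subr_ge0].
have p2 : 0 <= S * (- lam / 2 * Km - (1 - lam / 2) * Kd) by apply: mulr_ge0; rewrite ?subr_ge0.
have p3 : 0 <= - lam / 2 * (M - S * Km) by apply: mulr_ge0; [lra | rewrite subr_ge0].
lra.
Qed.

Section AffineEdge.
Context {R : realType}.
Local Notation mu := (@lebesgue_measure R).

Definition affine (a b l x : R) := a + (b - a) * x / l.

Lemma lebesgue_measure_itv0 (l : R) : 0 <= l -> mu `[0%R, l] = l%:E.
Proof.
move=> l0; rewrite lebesgue_measure_itv /=; case: ifPn => [_|].
  by rewrite sube0.
by rewrite -leNgt lee_fin => hl; congr EFin; apply/eqP; rewrite eq_le hl l0.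
Qed.

Lemma integral_itv0_cst (l c : R) : 0 <= l ->
  (\int[mu]_(x in `[0%R, l]) c%:E = (c * l)%:E)%E.
Proof.
move=> l0; rewrite (integral_cst mu (measurable_itv _)) EFinM.
by congr (_ * _)%E; exact: lebesgue_measure_itv0.
Qed.

Lemma integral_sqr_ge0 (l : R) (f : R -> R) :
  (0 <= \int[mu]_(x in `[0%R, l]) (f x ^+ 2)%:E)%E.
Proof. by apply: integral_ge0 => x _; rewrite lee_fin sqr_ge0. Qed.

Lemma measurable_affine_sqr (a b l : R) (D : set R) :
  measurable_fun D (fun x => affine a b l x ^+ 2).
Proof.
apply: measurable_funX; apply: measurable_funD; first exact: measurable_cst.
apply: measurable_funM; last exact: measurable_cst.
by apply: measurable_funM; [exact: measurable_cst | exact: measurable_id].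
Qed.

(* [affine a b l x] is the convex combination (1 - t) a + t b with t = x / l,
   and squaring is convex *)
Lemma affine_sqr_le (a b l x : R) : 0 < l -> 0 <= x <= l ->
  affine a b l x ^+ 2 <= a ^+ 2 + b ^+ 2.
Proof.
move=> l0 /andP[x0 xl]; rewrite /affine -mulrA.
set t := x / l.
have t0 : 0 <= t by rewrite divr_ge0 // ltW.
have t1 : t <= 1 by rewrite ler_pdivrMr // mul1r.
have h1 : 0 <= t * (1 - t) * (a - b) ^+ 2.
  by rewrite mulr_ge0 ?sqr_ge0 // mulr_ge0 // subr_ge0.
have h2 : 0 <= t * a ^+ 2 by rewrite mulr_ge0 ?sqr_ge0.
have h3 : 0 <= (1 - t) * b ^+ 2 by rewrite mulr_ge0 ?sqr_ge0 ?subr_ge0.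
nra.
Qed.

Lemma integral_affine_sqr_le (a b l : R) : 0 < l ->
  (\int[mu]_(x in `[0%R, l]) (affine a b l x ^+ 2)%:E <= ((a ^+ 2 + b ^+ 2) * l)%:E)%E.
Proof.
move=> l0; rewrite -integral_itv0_cst; last exact: ltW.
apply: ge0_le_integral => //.
- by move=> x _; rewrite lee_fin sqr_ge0.
- by apply/measurable_EFinP; exact: measurable_affine_sqr.
- by move=> x /=; rewrite in_itv /= lee_fin; exact: affine_sqr_le.
Qed.

Lemma integral_affine_cst_sqr (a l : R) : 0 <= l ->
  (\int[mu]_(x in `[0%R, l]) (affine a a l x ^+ 2)%:E = (a ^+ 2 * l)%:E)%E.
Proof.
move=> l0; rewrite -integral_itv0_cst //; apply: eq_integral => x _.
by rewrite /affine subrr !mul0r addr0.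
Qed.

Lemma edge_H1_affine (a b l : R) : 0 < l ->
  edge_H1 l (affine a b l) (fun=> (b - a) / l).
Proof.
move=> l0; split; [|split; [|split]].
- apply/integrableP; split; first exact/measurable_EFinP/measurable_cst.
  by rewrite integral_itv0_cst ?ltry //; exact: ltW.
- by rewrite integral_itv0_cst ?ltry //; exact: ltW.
- by apply: le_lt_trans (integral_affine_sqr_le a b l0) _; rewrite ltry.
- move=> x /andP[x0 xl].
  rewrite Rintegral_cst; last exact: measurable_itv.
  rewrite (_ : fine (mu `[0%R, x]) = x); last by rewrite lebesgue_measure_itv0.
  by rewrite /affine mulr0 mul0r addr0 mulrAC.
Qed.

End AffineEdge.

Section PiecewiseAffine.
Context {R : realType} (G : mgraph R).
Hypothesis len_gt0 : forall e : mE G, 0 < len e.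
Local Notation mu := (@lebesgue_measure R).

Definition interp (H : mV G -> R) : mE G -> R -> R :=
  fun e => affine (H (src e)) (H (tgt e)) (len e).
Definition slope (H : mV G -> R) : mE G -> R -> R :=
  fun e _ => (H (tgt e) - H (src e)) / len e.

Lemma endval_interp H e b : endval (interp H) e b = H (endvtx e b).
Proof.
case: b; rewrite /endval /interp /affine /=; last by rewrite mulr0 mul0r addr0.
by rewrite mulfK ?gt_eqF // addrC subrK.
Qed.

Lemma integral_slope_sqr H e :
  (\int[mu]_(x in `[0%R, len e]) (slope H e x ^+ 2)%:E
     = (((H (tgt e) - H (src e)) / len e) ^+ 2 * len e)%:E)%E.
Proof. by rewrite /slope integral_itv0_cst //; exact: ltW. Qed.

Lemma lincomb3_interp a1 a2 a3 H1 H2 H3 :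
  lincomb3 a1 a2 a3 (interp H1) (interp H2) (interp H3)
  = interp (fun v => a1 * H1 v + a2 * H2 v + a3 * H3 v).
Proof. by apply/funext => e; apply/funext => x; rewrite /lincomb3 /interp /affine; ring. Qed.

Lemma lincomb3_slope a1 a2 a3 H1 H2 H3 :
  lincomb3 a1 a2 a3 (slope H1) (slope H2) (slope H3)
  = slope (fun v => a1 * H1 v + a2 * H2 v + a3 * H3 v).
Proof. by apply/funext => e; apply/funext => x; rewrite /lincomb3 /slope; ring. Qed.

Lemma L2sq_fin_num (u : mE G -> R -> R) : (L2sq u < +oo)%E -> L2sq u \is a fin_num.
Proof. by rewrite ge0_fin_numE //; apply: esum_ge0 => e _; exact: integral_sqr_ge0. Qed.

Section Cover.
Variables (H : mV G -> R) (I : finType) (g : I -> mE G).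
Hypothesis cover : forall e, H (src e) != 0 \/ H (tgt e) != 0 -> exists i, g i = e.

Lemma L2sq_interp_le : (L2sq (interp H)
  <= (\sum_(i : I) (H (src (g i)) ^+ 2 + H (tgt (g i)) ^+ 2) * len (g i))%:E)%E.
Proof.
rewrite -sumEFin; apply: le_trans (esum_le_sum_cover _ _) _.
- by move=> e; exact: integral_sqr_ge0.
- move=> e nz; apply: cover; case: (eqVneq (H (src e)) 0) => [s0|]; [right|by left].
  apply: contra_neq nz => t0.
  by rewrite /interp s0 t0 integral_affine_cst_sqr ?expr0n ?mul0r //; exact: ltW.
- by apply: lee_sum => i _; exact: integral_affine_sqr_le.
Qed.

Lemma L2sq_slope_le : (L2sq (slope H)
  <= (\sum_(i : I) ((H (tgt (g i)) - H (src (g i))) / len (g i)) ^+ 2 * len (g i))%:E)%E.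
Proof.
rewrite -sumEFin; apply: le_trans (esum_le_sum_cover _ _) _.
- by move=> e; exact: integral_sqr_ge0.
- move=> e nz; apply: cover; case: (eqVneq (H (src e)) 0) => [s0|]; [right|by left].
  apply: contra_neq nz => t0.
  by rewrite integral_slope_sqr s0 t0 subrr mul0r expr0n mul0r.
- by apply: lee_sum => i _; rewrite integral_slope_sqr.
Qed.

Lemma inH1_interp : inH1 (interp H) (slope H).
Proof.
split; [|split; [|split]].
- by move=> e; exact: edge_H1_affine.
- by move=> e e' b b'; rewrite !endval_interp => ->.
- by apply: le_lt_trans L2sq_interp_le _; rewrite ltry.
- by apply: le_lt_trans L2sq_slope_le _; rewrite ltry.
Qed.

End Cover.

End PiecewiseAffine.

Section Lattice.
Variable d : nat.
Local Notation Z := 'rV[int]_d.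

Definition supnorm (z : Z) : nat := (\max_(i < d) `|z ord0 i|)%N.

Lemma supnorm_coord (z : Z) i : (`|z ord0 i| <= supnorm z)%N.
Proof. exact: (@leq_bigmax _ (fun i => `|z ord0 i|%N)). Qed.

Lemma supnorm_le (z : Z) n : (forall i, `|z ord0 i| <= n)%N -> (supnorm z <= n)%N.
Proof. by move=> h; apply/bigmax_leqP => i _; apply: h. Qed.

Lemma supnorm0 : supnorm 0 = 0%N.
Proof. by apply/eqP; rewrite -leqn0; apply: supnorm_le => i; rewrite mxE. Qed.

Lemma supnormN (z : Z) : supnorm (- z) = supnorm z.
Proof. by apply: eq_bigr => i _; rewrite mxE abszN. Qed.

Lemma supnormD (x y : Z) : (supnorm (x + y) <= supnorm x + supnorm y)%N.
Proof.
apply: supnorm_le => i; rewrite mxE.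
have := leqD_dist (x ord0 i) 0 (- y ord0 i).
rewrite opprK subr0 add0r => /leq_trans; apply.
by apply: leq_add; apply: supnorm_coord.
Qed.

Lemma supnorm_distC (x y : Z) : supnorm (x - y) = supnorm (y - x).
Proof. by rewrite -supnormN opprB. Qed.

Lemma supnorm_dist_tri (x y z : Z) :
  (supnorm (x - z) <= supnorm (x - y) + supnorm (y - z))%N.
Proof. by rewrite -[x - z](subrKA y); apply: supnormD. Qed.

(* points of the cube of radius n, encoded by their shifted coordinates in [0, 2n] *)
Definition cube (n : nat) := {ffun 'I_d -> 'I_(n.*2.+1)}.
Definition cube_pt n (f : cube n) : Z := \row_i ((f i : nat)%:Z - n%:Z).

Lemma card_cube n : #|{: cube n}| = (n.*2.+1 ^ d)%N.
Proof. by rewrite card_ffun !card_ord. Qed.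

Lemma cube_pt_inj n : injective (@cube_pt n).
Proof.
move=> f g /rowP fg; apply/ffunP => i; have := fg i; rewrite !mxE.
by move/addIr => [] /val_inj.
Qed.

Lemma supnorm_cube_pt n (f : cube n) : (supnorm (cube_pt f) <= n)%N.
Proof.
apply: supnorm_le => i; rewrite mxE; have := ltn_ord (f i).
move: (f i : nat) => m hm.
by case: (leqP m n) => hmn; [rewrite distnEr | rewrite distnEl ?(ltnW hmn)]; lia.
Qed.

Lemma cube_ptP n (z : Z) : (supnorm z <= n)%N -> exists f : cube n, cube_pt f = z.
Proof.
move=> zn; exists [ffun i => inord (absz (z ord0 i + n%:Z))].
apply/rowP => i; rewrite !mxE ffunE.
have := leq_trans (supnorm_coord z i) zn; move: (z ord0 i) => a an.
have /andP[na a_n] : (- n%:Z <= a <= n%:Z)%R.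
  by rewrite -ler_norml -abszE lez_nat.
have e : ((absz (a + n%:Z))%:Z = a + n%:Z)%R by rewrite gez0_abs //; lia.
have hl : (absz (a + n%:Z)%R < n.*2.+1)%N.
  by rewrite ltnS -(lez_nat) e; lia.
by rewrite inordK // e; lia.
Qed.

End Lattice.

Lemma seq_uniform_bound (T : eqType) (s : seq T) (P : T -> nat -> Prop) :
  (forall x B B', (B <= B')%N -> P x B -> P x B') ->
  (forall x, x \in s -> exists B, P x B) -> exists B, forall x, x \in s -> P x B.
Proof.
move=> mono; elim: s => [|y s IH] h; first by exists 0%N.
have [B1 HB1] := h y (mem_head _ _).
have [B2 HB2] : exists B, forall x, x \in s -> P x B.
  by apply: IH => x xs; apply: h; rewrite in_cons xs orbT.
exists (maxn B1 B2) => x; rewrite in_cons => /orP[/eqP ->|xs].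
  by apply: mono HB1; apply: leq_maxl.
by apply: mono (HB2 x xs); apply: leq_maxr.
Qed.

Section LatticeAction.
Variables (R : realType) (G : mgraph R) (d : nat).
Local Notation Z := 'rV[int]_d.
Variables (aV : Z -> mV G -> mV G) (aE : Z -> mE G -> mE G).
Hypothesis aV0 : forall v, aV 0 v = v.
Hypothesis aE0 : forall e, aE 0 e = e.
Hypothesis aVD : forall k l v, aV (k + l) v = aV k (aV l v).
Hypothesis aED : forall k l e, aE (k + l) e = aE k (aE l e).
Hypothesis aE_adj : forall k e, adj (aE k e) (aV k (src e)) (aV k (tgt e)).
Hypothesis aV_free : forall k v, aV k v = v -> k = 0.
Hypothesis aE_free : forall k e, aE k e = e -> k = 0.
Variables (sE : seq (mE G)) (sV : seq (mV G)).
Hypothesis aE_cocompact : forall e, exists k e0, e0 \in sE /\ e = aE k e0.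
Hypothesis aV_cocompact : forall v, exists k v0, v0 \in sV /\ v = aV k v0.

Lemma aV_injl k k' v : aV k v = aV k' v -> k = k'.
Proof.
move=> kk'; have : aV (- k' + k) v = v by rewrite aVD kk' -aVD addNr aV0.
by move/aV_free/eqP; rewrite addrC subr_eq0 => /eqP.
Qed.

Lemma aE_injl k k' e : aE k e = aE k' e -> k = k'.
Proof.
move=> kk'; have : aE (- k' + k) e = e by rewrite aED kk' -aED addNr aE0.
by move/aE_free/eqP; rewrite addrC subr_eq0 => /eqP.
Qed.

Lemma edge_rep_exists : ~ (exists s : seq (mE G), forall e, e \in s) ->
  exists e0, e0 \in sE.
Proof.
case: sE aE_cocompact => [|e0 s] cocompact infinite_E; last by exists e0; rewrite mem_head.
by case: infinite_E; exists [::] => e; have [k [e0 []]] := cocompact e.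
Qed.

Lemma dim_gt0 : ~ (exists s : seq (mE G), forall e, e \in s) -> (0 < d)%N.
Proof.
move=> infinite_E; case: (posnP d) => [d0|//]; case: infinite_E.
exists sE => e; have [k [e0 [e0sE ->]]] := aE_cocompact e.
suff -> : k = 0 by rewrite aE0.
by apply/rowP => i; have := ltn_ord i; rewrite {2}d0.
Qed.

Lemma vertex_orbit v : exists p : Z * mV G, (p.2 \in sV) && (v == aV p.1 p.2).
Proof. by have [k [v0 [v0sV ->]]] := aV_cocompact v; exists (k, v0); rewrite v0sV /=. Qed.

Lemma edge_orbit e : exists p : Z * mE G, (p.2 \in sE) && (e == aE p.1 p.2).
Proof. by have [k [e0 [e0sE ->]]] := aE_cocompact e; exists (k, e0); rewrite e0sE /=. Qed.

Definition vcoord v : Z := (xchoose (vertex_orbit v)).1.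
Definition vrep v : mV G := (xchoose (vertex_orbit v)).2.
Definition ecoord e : Z := (xchoose (edge_orbit e)).1.
Definition erep e : mE G := (xchoose (edge_orbit e)).2.

Lemma vcoordP v : vrep v \in sV /\ v = aV (vcoord v) (vrep v).
Proof. by have /andP[? /eqP] := xchooseP (vertex_orbit v). Qed.

Lemma ecoordP e : erep e \in sE /\ e = aE (ecoord e) (erep e).
Proof. by have /andP[? /eqP] := xchooseP (edge_orbit e). Qed.

Lemma rep_shift_bounded : exists B, forall p, p \in sV -> forall q, q \in sV ->
  forall k, aV k p = q -> (supnorm k <= B)%N.
Proof.
apply: seq_uniform_bound => [p B B' BB' Bp q qsV k kpq|p _].
  exact: leq_trans (Bp q qsV k kpq) BB'.
apply: seq_uniform_bound => [q B B' BB' Bq k kpq|q _].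
  exact: leq_trans (Bq k kpq) BB'.
have [[k0 k0pq]|no_k] := pselect (exists k, aV k p = q).
  by exists (supnorm k0) => k kpq; rewrite (aV_injl (etrans kpq (esym k0pq))).
by exists 0%N => k kpq; case: no_k; exists k.
Qed.

(* the defect is the shift between the representatives of v and of aV k v,
   both taken from the finite list sV *)
Lemma vcoord_act_bounded : exists B, forall v k,
  (supnorm (vcoord (aV k v) - (k + vcoord v)) <= B)%N.
Proof.
have [B HB] := rep_shift_bounded; exists B => v k.
have [rv ev] := vcoordP v; have [rkv ekv] := vcoordP (aV k v).
apply: (HB _ rkv _ rv).
by rewrite addrC aVD -ekv {2}ev -!aVD -addrA addNr aV0.
Qed.

Lemma endvtx_act k e b : exists b', endvtx (aE k e) b = aV k (endvtx e b').
Proof.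
by case: (aE_adj k e) => -[s t]; case: b; rewrite /= ?s ?t;
  [exists true|exists false|exists false|exists true].
Qed.

Lemma endvtx_offset_bounded : exists r, forall e0, e0 \in sE -> forall k b,
  (supnorm (vcoord (endvtx (aE k e0) b) - k) <= r)%N.
Proof.
have [B HB] := vcoord_act_bounded.
have offset w k : (supnorm (vcoord (aV k w) - k) <= B + supnorm (vcoord w))%N.
  have -> : vcoord (aV k w) - k = vcoord (aV k w) - (k + vcoord w) + vcoord w.
    by rewrite opprD addrA subrK.
  exact: leq_trans (supnormD _ _) (leq_add (HB w k) (leqnn _)).
apply: seq_uniform_bound => [e0 r r' rr' Hr k b|e0 _].
  exact: leq_trans (Hr k b) rr'.
exists (B + supnorm (vcoord (src e0)) + supnorm (vcoord (tgt e0)))%N => k b.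
have [[] ->] := endvtx_act k e0 b; rewrite /=.
- by have := offset (tgt e0) k; lia.
- by have := offset (src e0) k; lia.
Qed.

Section Tents.
Variable r : nat.
Hypothesis endvtx_offset : forall e0, e0 \in sE -> forall k b,
  (supnorm (vcoord (endvtx (aE k e0) b) - k) <= r)%N.
Variables (N : nat) (i0 : 'I_d) (e0 : mE G).
Hypothesis r_le_N : (r <= N)%N.
Hypothesis e0_rep : e0 \in sE.

Lemma endvtx_near_ecoord e b : (supnorm (vcoord (endvtx e b) - ecoord e) <= r)%N.
Proof.
by have [rep erep_e] := ecoordP e; have := endvtx_offset rep (ecoord e) b; rewrite -erep_e.
Qed.

Lemma edge_vcoord_dist e : (supnorm (vcoord (tgt e) - vcoord (src e)) <= r.*2)%N.
Proof.
apply: leq_trans (supnorm_dist_tri _ (ecoord e) _) _.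
rewrite [X in (_ + X)%N]supnorm_distC.
by have := endvtx_near_ecoord e false; have := endvtx_near_ecoord e true => /=; lia.
Qed.

(* [plateau n] is N for n <= N, then decreases with slope 1 and, the
   subtraction being truncated, vanishes for n >= 2N *)
Definition plateau (n : nat) : nat := minn N (N.*2 - n).
Definition center (j : nat) : Z := \row_i (if i == i0 then (j * (3 * N))%:Z else 0).
Definition tent (j : nat) (v : mV G) : R := (plateau (supnorm (vcoord v - center j)))%:R.
Definition tent3 (a1 a2 a3 : R) (v : mV G) : R := a1 * tent 0 v + a2 * tent 1 v + a3 * tent 2 v.

Lemma tent_edge_sqr j e : (tent j (tgt e) - tent j (src e)) ^+ 2 <= (r.*2)%:R ^+ 2.
Proof.
apply: le_trans (_ : _ <= (supnorm (vcoord (tgt e) - vcoord (src e)))%:R ^+ 2) _.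
  have := supnorm_dist_tri (vcoord (tgt e)) (vcoord (src e)) (center j).
  have := supnorm_dist_tri (vcoord (src e)) (vcoord (tgt e)) (center j).
  rewrite (supnorm_distC (vcoord (src e)) (vcoord (tgt e))) /tent /plateau.
  by move=> ? ?; apply: sqr_natr_sub_le; lia.
by rewrite lerXn2r ?nnegrE // ler_nat edge_vcoord_dist.
Qed.

Lemma supnorm_center j : (j < 3)%N -> (supnorm (center j) <= 6 * N)%N.
Proof. by move=> j3; apply: supnorm_le => i; rewrite mxE; case: ifP => _ /=; nia. Qed.

Lemma supnorm_center_sep j j' : (j < 3)%N -> (j' < 3)%N -> j != j' ->
  (3 * N <= supnorm (center j - center j'))%N.
Proof.
move=> j3 j'3 jj'; apply: leq_trans _ (supnorm_coord _ i0); rewrite !mxE eqxx.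
case: (leqP (j * (3 * N)) (j' * (3 * N))) => hle;
  [rewrite distnEr // | rewrite distnEl ?(ltnW hle) //];
  by move: j3 j'3 jj' hle; case: j => [|[|[|j]]] //; case: j' => [|[|[|j']]] //; lia.
Qed.

Lemma tent_plateau j j' k b : (j < 3)%N -> (supnorm (k - center j) <= N - r)%N ->
  (j' < 3)%N -> tent j' (endvtx (aE k e0) b) = (N * (j' == j))%:R.
Proof.
move=> j3 k_near j'3; rewrite /tent /plateau; set x := vcoord _.
have x_near : (supnorm (x - center j) <= N)%N.
  apply: leq_trans (supnorm_dist_tri _ k _) _.
  by apply: leq_trans (leq_add (endvtx_offset e0_rep k b) k_near) _; lia.
congr (_%:R); case: eqVneq => [->|j'j]; first by lia.
have := supnorm_center_sep j'3 j3 j'j; have := supnorm_dist_tri (center j') x (center j).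
by rewrite supnorm_distC [supnorm (center j' - x)]supnorm_distC; lia.
Qed.

Lemma tent3_plateau a1 a2 a3 j k b : (j < 3)%N -> (supnorm (k - center j) <= N - r)%N ->
  tent3 a1 a2 a3 (endvtx (aE k e0) b) = nth 0 [:: a1; a2; a3] j * N%:R.
Proof.
move=> j3 k_near; rewrite /tent3 !(tent_plateau _ j3 k_near) //.
by case: j j3 {k_near} => [|[|[|]]] //= _; rewrite ?muln1 ?muln0 !mulr0 ?addr0 ?add0r.
Qed.

Lemma tent_support j v : (j < 3)%N -> tent j v != 0 -> (supnorm (vcoord v) < 8 * N)%N.
Proof.
move=> j3; rewrite pnatr_eq0 /plateau => near.
have -> : vcoord v = vcoord v - center j + center j by rewrite subrK.
by apply: leq_ltn_trans (supnormD _ _) _; have := supnorm_center j3; lia.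
Qed.

Lemma tent3_support a1 a2 a3 v : tent3 a1 a2 a3 v != 0 -> (supnorm (vcoord v) < 8 * N)%N.
Proof.
rewrite /tent3; case: (eqVneq (tent 0 v) 0) => [t0|t0 _]; last exact: (tent_support _ t0).
case: (eqVneq (tent 1 v) 0) => [t1|t1 _]; last exact: (tent_support _ t1).
case: (eqVneq (tent 2 v) 0) => [t2|t2 _]; last exact: (tent_support _ t2).
by rewrite t0 t1 t2 !mulr0 !addr0 eqxx.
Qed.

Definition support_edge (x : cube d (8 * N + r) * 'I_(size sE)) : mE G :=
  aE (cube_pt x.1) (nth e0 sE x.2).

Lemma support_edge_cover (H : mV G -> R) e :
  (forall v, H v != 0 -> (supnorm (vcoord v) < 8 * N)%N) ->
  H (src e) != 0 \/ H (tgt e) != 0 -> exists x, support_edge x = e.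
Proof.
move=> H_supp H_e.
have [b /H_supp near] : exists b, H (endvtx e b) != 0 by case: H_e; [exists false|exists true].
have [f fe] : exists f : cube d (8 * N + r), cube_pt f = ecoord e.
  apply: cube_ptP.
  have -> : ecoord e = vcoord (endvtx e b) + (ecoord e - vcoord (endvtx e b)).
    by rewrite addrC subrK.
  apply: leq_trans (supnormD _ _) _; rewrite supnorm_distC.
  by apply: leq_add; [exact: ltnW | exact: endvtx_near_ecoord].
have [rep erep_e] := ecoordP e.
have idx : (index (erep e) sE < size sE)%N by rewrite index_mem.
by exists (f, Ordinal idx); rewrite /support_edge /= fe nth_index.
Qed.

Hypothesis len_gt0 : forall e : mE G, 0 < len e.
Variable c : R.
Hypothesis c_gt0 : 0 < c.
Hypothesis len_ge : forall e : mE G, c <= len e.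

Local Notation support := (cube d (8 * N + r) * 'I_(size sE))%type.

Lemma inH1_supported H : (forall v, H v != 0 -> (supnorm (vcoord v) < 8 * N)%N) ->
  inH1 (interp H) (slope H).
Proof. by move=> H_supp; apply: (inH1_interp len_gt0 (g := support_edge)) => e; exact: support_edge_cover. Qed.

Lemma slope_tent3_sqr_le a1 a2 a3 e :
  ((tent3 a1 a2 a3 (tgt e) - tent3 a1 a2 a3 (src e)) / len e) ^+ 2 * len e
  <= 3 * (a1 ^+ 2 + a2 ^+ 2 + a3 ^+ 2) * (r.*2)%:R ^+ 2 / c.
Proof.
pose D j := tent j (tgt e) - tent j (src e).
have diff_sqr (a : R) j : (a * D j) ^+ 2 <= a ^+ 2 * (r.*2)%:R ^+ 2.
  by rewrite exprMn ler_wpM2l ?sqr_ge0 //; exact: tent_edge_sqr.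
have -> : tent3 a1 a2 a3 (tgt e) - tent3 a1 a2 a3 (src e) = a1 * D 0%N + a2 * D 1%N + a3 * D 2%N.
  by rewrite /tent3 /D; ring.
set X := _ + _ + _; set Y := 3 * _ * _.
have X_le : X ^+ 2 <= Y.
  apply: le_trans (sqr_add3_le _ _ _) _; rewrite /Y -mulrA ler_pM2l // !mulrDl.
  by apply: lerD; [apply: lerD|]; exact: diff_sqr.
have len0 := len_gt0 e; have le_len := len_ge e; have X0 := sqr_ge0 X.
have -> : (X / len e) ^+ 2 * len e = X ^+ 2 / len e by field; rewrite gt_eqF.
by rewrite ler_pdivrMr // mulrAC ler_pdivlMr //; nra.
Qed.

Lemma L2sq_slope_tent3_le a1 a2 a3 :
  (L2sq (slope (tent3 a1 a2 a3))
   <= (#|{: support}|%:R * (3 * (a1 ^+ 2 + a2 ^+ 2 + a3 ^+ 2) * (r.*2)%:R ^+ 2 / c))%:E)%E.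
Proof.
apply: le_trans (L2sq_slope_le len_gt0 (g := support_edge) _) _.
  by move=> e; apply: support_edge_cover; exact: tent3_support.
by rewrite lee_fin mulr_natl -sumr_const; apply: ler_sum => x _; exact: slope_tent3_sqr_le.
Qed.

Lemma L2sq_interp_tent3_ge a1 a2 a3 j : (j < 3)%N ->
  ((#|{: cube d (N - r)}|%:R * (c * (nth 0 [:: a1; a2; a3] j * N%:R) ^+ 2))%:E
   <= L2sq (interp (tent3 a1 a2 a3)))%E.
Proof.
move=> j3; pose g (f : cube d (N - r)) := aE (center j + cube_pt f) e0.
have g_inj : injective g by move=> f f' /aE_injl /addrI; exact: cube_pt_inj.
rewrite /L2sq; apply: le_trans _ (sum_le_esum_inj _ g_inj); last by move=> e; exact: integral_sqr_ge0.
rewrite mulr_natl -sumr_const -sumEFin; apply: lee_sum => f _.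
have near : (supnorm (center j + cube_pt f - center j) <= N - r)%N.
  by rewrite addrC addKr supnorm_cube_pt.
rewrite /g /interp (tent3_plateau _ _ _ false j3 near).
rewrite (tent3_plateau _ _ _ true j3 near) integral_affine_cst_sqr; last exact: ltW.
by rewrite lee_fin mulrC ler_wpM2l ?sqr_ge0.
Qed.

Hypothesis N_gt0 : (0 < N)%N.

Lemma interp_tent_linindep : linindep3 (interp (tent 0)) (interp (tent 1)) (interp (tent 2)).
Proof.
move=> a1 a2 a3 vanish.
have coef0 j : (j < 3)%N -> nth 0 [:: a1; a2; a3] j = 0.
  move=> j3; have near : (supnorm (center j - center j) <= N - r)%N by rewrite subrr supnorm0.
  have : tent3 a1 a2 a3 (endvtx (aE (center j) e0) false) = 0.
    have := vanish (aE (center j) e0) 0; rewrite lexx (ltW (len_gt0 _)) lincomb3_interp.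
    by rewrite /interp /affine mulr0 mul0r addr0; apply.
  rewrite (tent3_plateau _ _ _ false j3 near) => /eqP; rewrite mulf_eq0 pnatr_eq0.
  by case/orP => /eqP // N0; move: N_gt0; rewrite N0.
by split; [exact: (coef0 0%N) | split; [exact: (coef0 1%N) | exact: (coef0 2%N)]].
Qed.

Lemma tent_test_space (lambda : R) : lambda < 0 ->
  (1 - lambda / 2) * (#|{: support}|%:R * (3 * (r.*2)%:R ^+ 2 / c))
    <= - lambda / 2 * (#|{: cube d (N - r)}|%:R * c * N%:R ^+ 2 / 3) ->
  exists (u1 u2 u3 u1' u2' u3' : mE G -> R -> R),
    inH1 u1 u1' /\ inH1 u2 u2' /\ inH1 u3 u3' /\ linindep3 u1 u2 u3 /\
    forall a1 a2 a3 : R,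
      let w := lincomb3 a1 a2 a3 u1 u2 u3 in
      let w' := lincomb3 a1 a2 a3 u1' u2' u3' in
      fine (L2sq w') + lambda * fine (L2sq w) <=
        lambda / 2 * (fine (L2sq w') + fine (L2sq w)).
Proof.
move=> lambda_lt0 N_large.
have inH1_tent j : (j < 3)%N -> inH1 (interp (tent j)) (slope (tent j)).
  by move=> j3; apply: inH1_supported => v; exact: tent_support.
exists (interp (tent 0)), (interp (tent 1)), (interp (tent 2)),
  (slope (tent 0)), (slope (tent 1)), (slope (tent 2)).
do 3 (split; first exact: inH1_tent); split; first exact: interp_tent_linindep.
move=> a1 a2 a3 /=; rewrite lincomb3_interp lincomb3_slope -/(tent3 a1 a2 a3).
have [_ [_ [/L2sq_fin_num w_fin /L2sq_fin_num w'_fin]]] :=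
  inH1_supported (@tent3_support a1 a2 a3).
have w'_le := L2sq_slope_tent3_le a1 a2 a3; rewrite -(fineK w'_fin) lee_fin in w'_le.
have w_ge j := L2sq_interp_tent3_ge a1 a2 a3 j; rewrite -(fineK w_fin) in w_ge.
move: (w_ge 0%N isT) (w_ge 1%N isT) (w_ge 2%N isT); rewrite !lee_fin /= => w_ge0 w_ge1 w_ge2.
apply: (quadratic_form_le_half (S := a1 ^+ 2 + a2 ^+ 2 + a3 ^+ 2) lambda_lt0 _ _ _ N_large).
- by rewrite !addr_ge0 ?sqr_ge0.
- by apply: le_trans w'_le _; rewrite le_eqVlt; apply/orP; left; apply/eqP; field; rewrite gt_eqF.
- move: w_ge0 w_ge1 w_ge2; set nB : R := #|_|%:R => w_ge0 w_ge1 w_ge2.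
  have split3 : 3 * ((a1 ^+ 2 + a2 ^+ 2 + a3 ^+ 2) * (nB * c * N%:R ^+ 2 / 3))
    = nB * (c * (a1 * N%:R) ^+ 2) + nB * (c * (a2 * N%:R) ^+ 2) + nB * (c * (a3 * N%:R) ^+ 2).
    by field.
  lra.
Qed.

End Tents.

End LatticeAction.

Lemma exists_large_N (R : realType) (lam c B : R) (d m r : nat) :
  lam < 0 -> 0 < c -> 0 <= B -> exists N : nat, [/\ (0 < N)%N, (r <= N)%N &
    (1 - lam / 2) * (((8 * N + r).*2.+1 ^ d * m)%:R * (3 * B / c))
      <= - lam / 2 * (((N - r).*2.+1 ^ d)%:R * c * N%:R ^+ 2 / 3)].
Proof.
move=> lam_lt0 c_gt0 B_ge0.
set nu := 1 - lam / 2; set mu := - lam / 2.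
have nu_gt0 : 0 < nu by rewrite /nu; lra.
have mu_gt0 : 0 < mu by rewrite /mu; lra.
set Q : R := 9 * nu * (17 ^ d * m)%:R * B / (mu * c ^+ 2).
have Q_ge0 : 0 <= Q.
  apply: divr_ge0; last by rewrite mulr_ge0 ?sqr_ge0 ?(ltW mu_gt0).
  by rewrite !mulr_ge0 ?(ltW nu_gt0).
pose N := maxn (maxn 1 (r.*2)) (Num.Def.archi_bound Q).
have N_gt0 : (0 < N)%N by rewrite !leq_max.
have r2_le_N : (r.*2 <= N)%N by rewrite !leq_max leqnn orbT.
have Q_le_N : Q <= N%:R.
  by apply: le_trans (ltW (archi_boundP Q_ge0)) _; rewrite ler_nat leq_maxr.
exists N; split => //; first lia.
set X : R := ((N - r).*2.+1 ^ d)%:R.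
have X_gt0 : 0 < X by rewrite ltr0n expn_gt0.
have card_le : (((8 * N + r).*2.+1 ^ d * m)%:R : R) <= (17 ^ d * m)%:R * X.
  rewrite /X -natrM ler_nat mulnAC -expnMn leq_mul2r; apply/orP; right.
  by case: (d) => [|d'] //; rewrite leq_exp2r //; lia.
have N_sqr : 9 * nu * (17 ^ d * m)%:R * B <= mu * c ^+ 2 * N%:R ^+ 2.
  apply: le_trans (_ : _ <= mu * c ^+ 2 * Q) _.
    by rewrite /Q [X in _ <= X]mulrC divfK // mulf_neq0 ?gt_eqF // exprn_gt0.
  apply: ler_wpM2l; first by rewrite mulr_ge0 ?sqr_ge0 ?(ltW mu_gt0).
  apply: le_trans Q_le_N _.
  by rewrite expr2 ler_peMl // ler1n.
apply: le_trans (_ : _ <= nu * ((17 ^ d * m)%:R * X * (3 * B / c))) _.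
  apply: ler_wpM2l; first exact: ltW.
  by apply: (ler_wpM2r _ card_le); rewrite divr_ge0 ?mulr_ge0 ?(ltW c_gt0).
rewrite -subr_ge0.
have -> : mu * (X * c * N%:R ^+ 2 / 3) - nu * ((17 ^ d * m)%:R * X * (3 * B / c)) =
    X / (3 * c) * (mu * c ^+ 2 * N%:R ^+ 2 - 9 * nu * (17 ^ d * m)%:R * B).
  by field; rewrite gt_eqF.
by rewrite mulr_ge0 ?subr_ge0 // divr_ge0 ?mulr_ge0 ?(ltW X_gt0) ?(ltW c_gt0).
Qed.

Theorem lemma6p2 (R : realType) (G : mgraph R) (hG : periodic_graph G)
  (lambda : R) (hl : lambda < 0) :
  exists (u1 u2 u3 u1' u2' u3' : mE G -> R -> R),
    inH1 u1 u1' /\ inH1 u2 u2' /\ inH1 u3 u3' /\ linindep3 u1 u2 u3 /\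
    forall a1 a2 a3 : R,
      let w := lincomb3 a1 a2 a3 u1 u2 u3 in
      let w' := lincomb3 a1 a2 a3 u1' u2' u3' in
      fine (L2sq w') + lambda * fine (L2sq w) <=
        lambda / 2 * (fine (L2sq w') + fine (L2sq w)).
Proof.
case: hG => [[len_gt0 [_ [_ [c [c_gt0 len_ge]]]]] [infinite_E [_ [d [aV [aE action]]]]]].
case: action => aV0 [aE0 [aVD [aED [_ [aE_adj [aV_free [aE_free cocompact]]]]]]].
case: cocompact => [[sE aE_cocompact] [sV aV_cocompact]].
have [r endvtx_offset] := endvtx_offset_bounded aV0 aVD aE_adj aV_free sE aV_cocompact.
have [e0 e0_rep] := edge_rep_exists aE_cocompact infinite_E.
pose i0 : 'I_d := Ordinal (dim_gt0 aE0 aE_cocompact infinite_E).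
have [N [N_gt0 r_le_N N_large]] :=
  exists_large_N d (size sE) r hl c_gt0 (sqr_ge0 (r.*2)%:R).
apply: (tent_test_space aE0 aED aE_free aE_cocompact endvtx_offset i0 r_le_N e0_rep
  len_gt0 c_gt0 len_ge N_gt0 hl).
by rewrite card_prod !card_cube card_ord.
Qed.
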